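(* Let $I=[a,b]$, $K_1,K_2\in C(I\times I,\mathbb{R})$, $h\in C(I,\mathbb{R})$, and let $f,g:I\times\mathbb{R}\to\mathbb{R}$ be continuous. Consider the integral equation $$x(t)=\int_a^b\big(K_1(t,s)+K_2(t,s)\big)\big(f(s,x(s))+g(s,x(s))\big)\,ds+h(t),\qquad t\in I.$$ Assume: (i) $K_1(t,s)\ge0$ and $K_2(t,s)\le0$ for all $t,s\in I$; (ii) there exist $\theta\in\Theta$ and positive numbers $\lambda,\mu$ such that for all $t\in I$ and all $x,y\in\mathbb{R}$ with $x\ge y$, $$0\le f(t,x)-f(t,y)\le\lambda\,\theta(x-y),\qquad -\mu\,\theta(x-y)\le g(t,x)-g(t,y)\le 0;$$ (iii) $(\lambda+\mu)\cdot\sup_{t\in I}\int_a^b\big[K_1(t,s)-K_2(t,s)\big]ds\le 1$. If the equation admits a coupled lower-upper solution, then it has a unique solution in $C(I,\mathbb{R})$.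
   Context: $\Psi$ is the set of all functions $\psi:[0,\infty)\to[0,\infty)$ such that for every $r>0$ the limit $\lim_{t\to r}\psi(t)$ exists and is $>0$, and $\lim_{t\to0^+}\psi(t)=0$. $\Theta$ is the set of all functions $\theta:[0,\infty)\to[0,\infty)$ that are nondecreasing and for which there exists $\psi\in\Psi$ with $\theta(r)=\frac r2-\psi\!\left(\frac r2\right)$ for all $r\ge0$. A pair $(\alpha,\beta)$ of functions in $C(I,\mathbb{R})$ is a coupled lower-upper solution of the equation if for all $t\in I$: $$\alpha(t)\le\int_a^bK_1(t,s)[f(s,\alpha(s))+g(s,\beta(s))]ds+\int_a^bK_2(t,s)[f(s,\beta(s))+g(s,\alpha(s))]ds+h(t),$$ $$\beta(t)\ge\int_a^bK_1(t,s)[f(s,\beta(s))+g(s,\alpha(s))]ds+\int_a^bK_2(t,s)[f(s,\alpha(s))+g(s,\beta(s))]ds+h(t).$$ *)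

From Stdlib Require Import Reals ClassicalEpsilon.
Open Scope R_scope.

(* Riemann integral of f over [a,b]; equals RiemannInt when f is Riemann
   integrable (which holds for all integrands used below, being continuous),
   and 0 otherwise. RiemannInt is independent of the integrability proof. *)
Definition integral (f : R -> R) (a b : R) : R :=
  match excluded_middle_informative
          (exists pr : Riemann_integrable f a b, True) with
  | left H => RiemannInt (proj1_sig (constructive_indefinite_description _ H))
  | right _ => 0
  end.

Definition inI (a b t : R) : Prop := a <= t <= b.

Definition cont_on_I (a b : R) (x : R -> R) : Prop :=
  forall t, inI a b t -> forall eps, 0 < eps -> exists delta, 0 < delta /\
    forall t', inI a b t' -> Rabs (t' - t) < delta -> Rabs (x t' - x t) < eps.

Definition cont_on_II (a b : R) (K : R -> R -> R) : Prop :=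
  forall t s, inI a b t -> inI a b s -> forall eps, 0 < eps ->
    exists delta, 0 < delta /\
    forall t' s', inI a b t' -> inI a b s' -> Rabs (t' - t) < delta ->
      Rabs (s' - s) < delta -> Rabs (K t' s' - K t s) < eps.

Definition cont_on_IxR (a b : R) (f : R -> R -> R) : Prop :=
  forall t u, inI a b t -> forall eps, 0 < eps ->
    exists delta, 0 < delta /\
    forall t' u', inI a b t' -> Rabs (t' - t) < delta ->
      Rabs (u' - u) < delta -> Rabs (f t' u' - f t u) < eps.

(* The class Psi (functions on [0,oo), only their values on [0,oo) matter). *)
Definition in_Psi (psi : R -> R) : Prop :=
  (forall t, 0 <= t -> 0 <= psi t) /\
  (forall r, 0 < r -> exists L, 0 < L /\
     forall eps, 0 < eps -> exists delta, 0 < delta /\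
       forall t, 0 <= t -> t <> r -> Rabs (t - r) < delta ->
         Rabs (psi t - L) < eps) /\
  (forall eps, 0 < eps -> exists delta, 0 < delta /\
     forall t, 0 < t -> t < delta -> Rabs (psi t) < eps).

Definition in_Theta (theta : R -> R) : Prop :=
  (forall r, 0 <= r -> 0 <= theta r) /\
  (forall r s, 0 <= r -> r <= s -> theta r <= theta s) /\
  (exists psi, in_Psi psi /\ forall r, 0 <= r -> theta r = r / 2 - psi (r / 2)).

Definition eq_rhs (a b : R) (K1 K2 : R -> R -> R) (f g : R -> R -> R)
  (h : R -> R) (x : R -> R) (t : R) : R :=
  integral (fun s => (K1 t s + K2 t s) * (f s (x s) + g s (x s))) a b + h t.

Definition is_solution (a b : R) (K1 K2 f g : R -> R -> R) (h x : R -> R) : Prop :=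
  cont_on_I a b x /\ forall t, inI a b t -> x t = eq_rhs a b K1 K2 f g h x t.

Definition coupled_lower_upper (a b : R) (K1 K2 f g : R -> R -> R)
  (h alpha beta : R -> R) : Prop :=
  cont_on_I a b alpha /\ cont_on_I a b beta /\
  forall t, inI a b t ->
    alpha t <= integral (fun s => K1 t s * (f s (alpha s) + g s (beta s))) a b
             + integral (fun s => K2 t s * (f s (beta s) + g s (alpha s))) a b
             + h t /\
    beta t >= integral (fun s => K1 t s * (f s (beta s) + g s (alpha s))) a b
             + integral (fun s => K2 t s * (f s (alpha s) + g s (beta s))) a b
             + h t.

From Stdlib Require Import Reals Lra Lia Classical ClassicalEpsilon FunctionalExtensionality.
Open Scope R_scope.

(* Since θ(r) = r/2 - ψ(r/2) <= r/2, hypotheses (i)-(iii) give, for the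
   right-hand side operator T and D a bound of |x - y| on I,
     |Tx(t) - Ty(t)| <= ∫ (K1 - K2)(t,s) (λ+μ) θ(D) ds <= (λ+μ) S θ(D) <= D/2,
   so T halves sup-distances on C(I).  The Picard iterates from 0 then converge
   uniformly to a continuous fixed point, and two fixed points are at distance
   at most D/2^n for every n. *)

Lemma Rabs_sub_triang (x y z : R) : Rabs (x - z) <= Rabs (x - y) + Rabs (y - z).
Proof. replace (x - z) with ((x - y) + (y - z)) by ring. apply Rabs_triang. Qed.

Section ContinuityOnInterval.

Variables a b : R.

(* Continuity on I is moved to continuity on R through the retraction [clamp]. *)
Definition clamp (t : R) : R := Rmax a (Rmin b t).

Lemma clamp_id t : inI a b t -> clamp t = t.
Proof. unfold inI, clamp, Rmax, Rmin; repeat destruct Rle_dec; lra. Qed.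

Lemma clamp_dist t t' : Rabs (clamp t' - clamp t) <= Rabs (t' - t).
Proof.
  unfold clamp, Rmax, Rmin; repeat destruct Rle_dec; unfold Rabs;
    repeat destruct Rcase_abs; lra.
Qed.

Lemma cont_on_I_continuity_pt v :
  (forall c, inI a b c -> continuity_pt v c) -> cont_on_I a b v.
Proof.
  intros Hv t Ht eps Heps.
  destruct (Hv t Ht eps Heps) as [d [Hd Hvd]]; simpl in Hvd; unfold R_dist in Hvd.
  exists d; split; [exact Hd|]. intros t' _ Htt.
  destruct (Req_dec t' t) as [->|Hne].
  - unfold Rminus; rewrite Rplus_opp_r, Rabs_R0; lra.
  - apply Hvd; repeat split; auto.
Qed.

Lemma cont_on_I_ext u v : cont_on_I a b u ->
  (forall t, inI a b t -> u t = v t) -> cont_on_I a b v.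
Proof.
  intros Hu Huv t Ht eps Heps. destruct (Hu t Ht eps Heps) as [d [Hd Hud]].
  exists d; split; [exact Hd|]. intros t' Ht' Htt. rewrite <- !Huv; auto.
Qed.

Lemma cont_on_I_const c : cont_on_I a b (fun _ => c).
Proof.
  intros t _ eps Heps. exists 1; split; [lra|]. intros.
  unfold Rminus; rewrite Rplus_opp_r, Rabs_R0; exact Heps.
Qed.

Hypothesis Hab : a <= b.

Lemma clamp_inI t : inI a b (clamp t).
Proof. unfold inI, clamp, Rmax, Rmin; repeat destruct Rle_dec; lra. Qed.

Lemma continuity_pt_clamp u : cont_on_I a b u ->
  forall c, continuity_pt (fun t => u (clamp t)) c.
Proof.
  intros Hu c eps Heps.
  destruct (Hu (clamp c) (clamp_inI c) eps Heps) as [d [Hd Hud]].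
  exists d; split; [exact Hd|]. intros t [_ Htc]; simpl in *; unfold R_dist in *.
  apply Hud; [apply clamp_inI|]. eapply Rle_lt_trans; [apply clamp_dist|exact Htc].
Qed.

Lemma cont_on_I_plus u v : cont_on_I a b u -> cont_on_I a b v ->
  cont_on_I a b (fun t => u t + v t).
Proof.
  intros Hu Hv. apply cont_on_I_ext with (fun t => u (clamp t) + v (clamp t)).
  - apply cont_on_I_continuity_pt; intros c _.
    apply continuity_pt_plus; apply continuity_pt_clamp; assumption.
  - intros; rewrite clamp_id; auto.
Qed.

Lemma cont_on_I_minus u v : cont_on_I a b u -> cont_on_I a b v ->
  cont_on_I a b (fun t => u t - v t).
Proof.
  intros Hu Hv. apply cont_on_I_ext with (fun t => u (clamp t) - v (clamp t)).
  - apply cont_on_I_continuity_pt; intros c _.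
    apply continuity_pt_minus; apply continuity_pt_clamp; assumption.
  - intros; rewrite clamp_id; auto.
Qed.

Lemma cont_on_I_mult u v : cont_on_I a b u -> cont_on_I a b v ->
  cont_on_I a b (fun t => u t * v t).
Proof.
  intros Hu Hv. apply cont_on_I_ext with (fun t => u (clamp t) * v (clamp t)).
  - apply cont_on_I_continuity_pt; intros c _.
    apply continuity_pt_mult; apply continuity_pt_clamp; assumption.
  - intros; rewrite clamp_id; auto.
Qed.

Lemma cont_on_I_bounded u : cont_on_I a b u ->
  exists M, 0 <= M /\ forall s, inI a b s -> Rabs (u s) <= M.
Proof.
  intros Hu. pose proof (continuity_pt_clamp u Hu) as Hc.
  destruct (continuity_ab_maj _ a b Hab (fun c _ => Hc c)) as [sM [HM HsM]].
  destruct (continuity_ab_min _ a b Hab (fun c _ => Hc c)) as [sm [Hm Hsm]].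
  rewrite (clamp_id sM HsM) in HM. rewrite (clamp_id sm Hsm) in Hm.
  exists (Rabs (u sM) + Rabs (u sm)).
  split; [pose proof (Rabs_pos (u sM)); pose proof (Rabs_pos (u sm)); lra|].
  intros s Hs. specialize (HM s Hs). specialize (Hm s Hs).
  rewrite (clamp_id s Hs) in HM, Hm.
  revert HM Hm. unfold Rabs; repeat destruct Rcase_abs; lra.
Qed.

End ContinuityOnInterval.

Lemma cont_on_I_slice a b K t : cont_on_II a b K -> inI a b t ->
  cont_on_I a b (fun s => K t s).
Proof.
  intros HK Ht s Hs eps Heps. destruct (HK t s Ht Hs eps Heps) as [d [Hd HKd]].
  exists d; split; [exact Hd|]. intros s' Hs' Hss. apply HKd; auto.
  unfold Rminus; rewrite Rplus_opp_r, Rabs_R0; exact Hd.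
Qed.

Lemma cont_on_I_comp a b f x : cont_on_IxR a b f -> cont_on_I a b x ->
  cont_on_I a b (fun s => f s (x s)).
Proof.
  intros Hf Hx t Ht eps Heps. destruct (Hf t (x t) Ht eps Heps) as [d1 [Hd1 Hfd]].
  destruct (Hx t Ht d1 Hd1) as [d2 [Hd2 Hxd]].
  exists (Rmin d1 d2); split; [apply Rmin_pos; assumption|].
  intros t' Ht' Htt. apply Hfd; auto.
  - eapply Rlt_le_trans; [exact Htt|apply Rmin_l].
  - apply Hxd; auto. eapply Rlt_le_trans; [exact Htt|apply Rmin_r].
Qed.

Lemma cont_on_II_uniform_in_first a b K : a <= b -> cont_on_II a b K ->
  forall t, inI a b t -> forall eps, 0 < eps ->
  exists d, 0 < d /\ forall t' s, inI a b t' -> inI a b s ->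
    Rabs (t' - t) < d -> Rabs (K t' s - K t s) < eps.
Proof.
  intros Hab HK t Ht eps Heps.
  (* The supremum of [E] is [b], and it belongs to [E]. *)
  set (E := fun u => a <= u <= b /\ exists d, 0 < d /\
    forall t' s, inI a b t' -> inI a b s -> s <= u -> Rabs (t' - t) < d ->
      Rabs (K t' s - K t s) < eps).
  assert (Ea : E a).
  { split; [lra|]. assert (Ha : inI a b a) by (unfold inI; lra).
    destruct (HK t a Ht Ha eps Heps) as [d [Hd HKd]]. exists d; split; [exact Hd|].
    intros t' s Ht' Hs Hsa Htt. replace s with a by (unfold inI in Hs; lra).
    apply HKd; auto. unfold Rminus; rewrite Rplus_opp_r, Rabs_R0; exact Hd. }
  destruct (completeness E) as [c [Hub Hlub]].
  { exists b; intros u [Hu _]; lra. }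
  { exists a; exact Ea. }
  assert (Hc : inI a b c).
  { split; [apply Hub, Ea|apply Hlub; intros u [Hu _]; lra]. }
  destruct (HK t c Ht Hc (eps / 2) ltac:(lra)) as [dc [Hdc HKc]].
  assert (Hnear : exists u, E u /\ c - dc < u).
  { apply NNPP; intro Hno.
    assert (Hcdc : is_upper_bound E (c - dc)).
    { intros u Eu. apply Rnot_lt_le; intro Hlt. apply Hno; exists u; auto. }
    specialize (Hlub _ Hcdc). lra. }
  destruct Hnear as [u [[Hu [du [Hdu HKu]]] Hcu]].
  set (v := Rmin b (c + dc / 2)).
  assert (Ev : E v).
  { split; [unfold v, Rmin; destruct Rle_dec; unfold inI in Hc; lra|].
    exists (Rmin du dc); split; [apply Rmin_pos; assumption|].
    intros t' s Ht' Hs Hsv Htt.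
    assert (Htdu : Rabs (t' - t) < du) by (eapply Rlt_le_trans; [exact Htt|apply Rmin_l]).
    assert (Htdc : Rabs (t' - t) < dc) by (eapply Rlt_le_trans; [exact Htt|apply Rmin_r]).
    destruct (Rle_dec s u) as [Hsu|Hsu]; [apply HKu; auto|].
    assert (Hsc : Rabs (s - c) < dc).
    { assert (s <= c + dc / 2) by (eapply Rle_trans; [exact Hsv|apply Rmin_r]).
      unfold Rabs; destruct Rcase_abs; lra. }
    assert (Httt : Rabs (t - t) < dc)
      by (unfold Rminus; rewrite Rplus_opp_r, Rabs_R0; exact Hdc).
    pose proof (HKc t' s Ht' Hs Htdc Hsc).
    pose proof (HKc t s Ht Hs Httt Hsc).
    pose proof (Rabs_sub_triang (K t' s) (K t c) (K t s)).
    rewrite (Rabs_minus_sym (K t c)) in *. lra. }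
  assert (Hvb : v = b).
  { assert (Hvc : v <= c) by (apply Hub, Ev).
    revert Hvc; unfold v, Rmin; destruct Rle_dec; lra. }
  destruct Ev as [_ [d [Hd HKd]]]. exists d; split; [exact Hd|].
  intros t' s Ht' Hs Htt. apply HKd; auto. rewrite Hvb; apply Hs.
Qed.

Section IntegralsOnInterval.

Variables a b : R.
Hypothesis Hab : a <= b.

Lemma integral_RiemannInt u (pr : Riemann_integrable u a b) :
  integral u a b = RiemannInt pr.
Proof.
  unfold integral. destruct excluded_middle_informative as [H|H].
  - apply RiemannInt_P5.
  - exfalso; apply H; exists pr; trivial.
Qed.

Lemma cont_on_I_Riemann_integrable u : cont_on_I a b u -> Riemann_integrable u a b.
Proof.
  intros Hu. apply Riemann_integrable_ext with (fun t => u (clamp a b t)).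
  - intros t Ht. rewrite Rmin_left, Rmax_right in Ht by exact Hab.
    rewrite clamp_id; auto.
  - apply continuity_implies_RiemannInt; auto. intros; apply continuity_pt_clamp; auto.
Qed.

Lemma integral_ext u v : (forall s, u s = v s) -> integral u a b = integral v a b.
Proof. intros Huv. f_equal. apply functional_extensionality, Huv. Qed.

Lemma integral_lincomb u v l : cont_on_I a b u -> cont_on_I a b v ->
  integral (fun s => u s + l * v s) a b = integral u a b + l * integral v a b.
Proof.
  intros Hu Hv.
  pose proof (cont_on_I_Riemann_integrable u Hu) as pu.
  pose proof (cont_on_I_Riemann_integrable v Hv) as pv.
  rewrite (integral_RiemannInt _ pu), (integral_RiemannInt _ pv),
    (integral_RiemannInt _ (RiemannInt_P10 l pu pv)).
  apply RiemannInt_P13.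
Qed.

Lemma integral_const c : integral (fun _ => c) a b = c * (b - a).
Proof.
  change (fun _ : R => c) with (fct_cte c).
  rewrite (integral_RiemannInt _ (RiemannInt_P14 a b c)). apply RiemannInt_P15.
Qed.

Lemma integral_scal c u : cont_on_I a b u ->
  integral (fun s => c * u s) a b = c * integral u a b.
Proof.
  intros Hu. rewrite (integral_ext _ (fun s => 0 + c * u s)) by (intros; ring).
  rewrite integral_lincomb, integral_const by (auto; apply cont_on_I_const). ring.
Qed.

Lemma integral_le u v : cont_on_I a b u -> cont_on_I a b v ->
  (forall s, a < s < b -> u s <= v s) -> integral u a b <= integral v a b.
Proof.
  intros Hu Hv Huv.
  rewrite (integral_RiemannInt _ (cont_on_I_Riemann_integrable u Hu)),
    (integral_RiemannInt _ (cont_on_I_Riemann_integrable v Hv)).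
  apply RiemannInt_P19; assumption.
Qed.

Lemma integral_dist_le u v w :
  cont_on_I a b u -> cont_on_I a b v -> cont_on_I a b w ->
  (forall s, a < s < b -> Rabs (u s - v s) <= w s) ->
  Rabs (integral u a b - integral v a b) <= integral w a b.
Proof.
  intros Hu Hv Hw Huvw.
  assert (Hone : forall p q, cont_on_I a b p -> cont_on_I a b q ->
    (forall s, a < s < b -> p s - q s <= w s) ->
    integral p a b - integral q a b <= integral w a b).
  { intros p q Hp Hq Hpq.
    replace (integral p a b - integral q a b)
      with (integral p a b + -1 * integral q a b) by ring.
    rewrite <- integral_lincomb by assumption.
    apply integral_le; auto.
    - apply cont_on_I_plus; auto. apply cont_on_I_mult; auto. apply cont_on_I_const.
    - intros s Hs. specialize (Hpq s Hs). lra. }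
  apply Rabs_le; split.
  - enough (integral v a b - integral u a b <= integral w a b) by lra.
    apply Hone; auto. intros s Hs. specialize (Huvw s Hs).
    rewrite Rabs_minus_sym in Huvw. eapply Rle_trans; [apply Rle_abs|exact Huvw].
  - apply Hone; auto. intros s Hs. eapply Rle_trans; [apply Rle_abs|exact (Huvw s Hs)].
Qed.

End IntegralsOnInterval.

Lemma geometric_small C eps : 0 < eps -> exists n, C * (/ 2) ^ n < eps.
Proof.
  intros Heps.
  assert (Hhalf : Rabs (/ 2) < 1) by (rewrite Rabs_pos_eq; lra).
  assert (HC1 : 0 < Rabs C + 1) by (pose proof (Rabs_pos C); lra).
  destruct (pow_lt_1_zero _ Hhalf (eps / (Rabs C + 1)))
    as [N HN]; [apply Rdiv_lt_0_compat; assumption|].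
  exists N. specialize (HN N (Nat.le_refl N)).
  apply Rle_lt_trans with ((Rabs C + 1) * Rabs ((/ 2) ^ N)).
  - eapply Rle_trans; [apply Rle_abs|]. rewrite Rabs_mult.
    apply Rmult_le_compat_r; [apply Rabs_pos|lra].
  - apply Rlt_le_trans with ((Rabs C + 1) * (eps / (Rabs C + 1))).
    + apply Rmult_lt_compat_l; assumption.
    + right; field; lra.
Qed.

Lemma Rabs_le_geometric_eq0 r C : (forall n, Rabs r <= C * (/ 2) ^ n) -> r = 0.
Proof.
  intros Hr. apply NNPP; intro Hne.
  destruct (geometric_small C (Rabs r) (Rabs_pos_lt r Hne)) as [n Hn].
  specialize (Hr n). lra.
Qed.

Section GeometricUniformLimit.

Variables a b : R.
Hypothesis Hab : a <= b.
Variable X : nat -> R -> R.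

Lemma geometric_uniform_limit C :
  (forall n s, inI a b s -> Rabs (X (S n) s - X n s) <= C * (/ 2) ^ n) ->
  exists x, forall n s, inI a b s -> Rabs (X n s - x s) <= 2 * C * (/ 2) ^ n.
Proof.
  intros Hstep.
  assert (HC : 0 <= C).
  { assert (Ha : inI a b a) by (unfold inI; lra).
    pose proof (Hstep O a Ha). pose proof (Rabs_pos (X 1%nat a - X O a)).
    simpl in *; lra. }
  assert (Htele : forall n k s, inI a b s ->
    Rabs (X (n + k)%nat s - X n s) <= 2 * C * (/ 2) ^ n - 2 * C * (/ 2) ^ (n + k)).
  { intros n k s Hs. induction k as [|k IHk].
    - rewrite Nat.add_0_r. unfold Rminus; rewrite !Rplus_opp_r, Rabs_R0; lra.
    - rewrite Nat.add_succ_r.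
      pose proof (Rabs_sub_triang (X (S (n + k)) s) (X (n + k)%nat s) (X n s)).
      pose proof (Hstep (n + k)%nat s Hs). simpl pow. lra. }
  assert (Hcauchy : forall n m s, inI a b s -> (n <= m)%nat ->
    Rabs (X m s - X n s) <= 2 * C * (/ 2) ^ n).
  { intros n m s Hs Hnm. replace m with (n + (m - n))%nat by lia.
    pose proof (Htele n (m - n)%nat s Hs).
    assert (0 <= 2 * C * (/ 2) ^ (n + (m - n)))
      by (apply Rmult_le_pos; [lra|apply pow_le; lra]).
    lra. }
  assert (Hcrit : forall t, Cauchy_crit (fun n => X n (clamp a b t))).
  { intros t eps Heps. destruct (geometric_small (4 * C) eps Heps) as [N HN].
    exists N. intros n m Hn Hm; unfold R_dist.
    pose proof (clamp_inI a b Hab t) as Ht.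
    pose proof (Hcauchy N n _ Ht Hn). pose proof (Hcauchy N m _ Ht Hm).
    pose proof (Rabs_sub_triang (X n (clamp a b t)) (X N (clamp a b t)) (X m (clamp a b t))).
    rewrite (Rabs_minus_sym (X N _)) in *. lra. }
  exists (fun t => proj1_sig (R_complete _ (Hcrit t))).
  intros n t Ht. destruct (R_complete _ (Hcrit t)) as [l Hl]; simpl.
  rewrite (clamp_id a b t Ht) in Hl.
  apply Rnot_lt_le; intro Hlt.
  destruct (Hl (Rabs (X n t - l) - 2 * C * (/ 2) ^ n)) as [N HN]; [lra|].
  specialize (HN (Nat.max N n) ltac:(lia)); unfold R_dist in HN; cbv beta in HN.
  pose proof (Hcauchy n (Nat.max N n) t Ht ltac:(lia)).
  pose proof (Rabs_sub_triang (X n t) (X (Nat.max N n) t) l) as Htri.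
  rewrite (Rabs_minus_sym (X n t) (X (Nat.max N n) t)) in Htri. lra.
Qed.

Lemma cont_on_I_geometric_limit x B :
  (forall n, cont_on_I a b (X n)) ->
  (forall n s, inI a b s -> Rabs (X n s - x s) <= B * (/ 2) ^ n) ->
  cont_on_I a b x.
Proof.
  intros HX Hlim t Ht eps Heps.
  destruct (geometric_small B (eps / 3)) as [n Hn]; [lra|].
  destruct (HX n t Ht (eps / 3)) as [d [Hd HXd]]; [lra|].
  exists d; split; [exact Hd|]. intros t' Ht' Htt.
  specialize (HXd t' Ht' Htt).
  pose proof (Hlim n t Ht). pose proof (Hlim n t' Ht').
  pose proof (Rabs_sub_triang (x t') (X n t') (x t)) as Htri.
  pose proof (Rabs_sub_triang (X n t') (X n t) (x t)).
  rewrite (Rabs_minus_sym (x t') (X n t')) in Htri. lra.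
Qed.

End GeometricUniformLimit.

Section HalfContractionFixedPoint.

Variables a b : R.
Hypothesis Hab : a <= b.
Variable T : (R -> R) -> R -> R.
Hypothesis T_cont : forall x, cont_on_I a b x -> cont_on_I a b (T x).
Hypothesis T_half : forall x y D, cont_on_I a b x -> cont_on_I a b y ->
  (forall s, inI a b s -> Rabs (x s - y s) <= D) ->
  forall t, inI a b t -> Rabs (T x t - T y t) <= D / 2.

Definition picard (n : nat) : R -> R := Nat.iter n T (fun _ => 0).

Lemma picard_cont n : cont_on_I a b (picard n).
Proof. induction n as [|n IHn]; [apply cont_on_I_const|apply T_cont, IHn]. Qed.

Lemma picard_step : exists C, forall n s, inI a b s ->
  Rabs (picard (S n) s - picard n s) <= C * (/ 2) ^ n.
Proof.
  destruct (cont_on_I_bounded a b Hab _ (picard_cont 1)) as [C [_ HC]].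
  exists C. induction n as [|n IHn]; intros s Hs.
  - rewrite Rmult_1_r, Rminus_0_r. apply HC, Hs.
  - replace (C * (/ 2) ^ S n) with (C * (/ 2) ^ n / 2) by (simpl; field).
    apply T_half; auto using picard_cont.
Qed.

Lemma half_contraction_fixed_point :
  exists x, cont_on_I a b x /\ forall t, inI a b t -> x t = T x t.
Proof.
  destruct picard_step as [C HC].
  destruct (geometric_uniform_limit a b Hab picard C HC) as [x Hx].
  assert (Hxc : cont_on_I a b x)
    by exact (cont_on_I_geometric_limit a b picard x _ picard_cont Hx).
  exists x; split; [exact Hxc|]. intros t Ht.
  apply Rminus_diag_uniq, (Rabs_le_geometric_eq0 _ (2 * C)). intros n.
  pose proof (Hx (S n) t Ht) as Hnext.
  pose proof (T_half _ _ _ (picard_cont n) Hxc (Hx n) t Ht) as HT.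
  pose proof (Rabs_sub_triang (x t) (picard (S n) t) (T x t)) as Htri.
  rewrite Rabs_minus_sym in Hnext. simpl pow in Hnext.
  change (picard (S n) t) with (T (picard n) t) in *. lra.
Qed.

Lemma half_contraction_fixed_point_unique x y :
  cont_on_I a b x -> cont_on_I a b y ->
  (forall t, inI a b t -> x t = T x t) -> (forall t, inI a b t -> y t = T y t) ->
  forall t, inI a b t -> x t = y t.
Proof.
  intros Hx Hy Hxfix Hyfix.
  destruct (cont_on_I_bounded a b Hab _ (cont_on_I_minus a b Hab x y Hx Hy)) as [D [_ HD]].
  assert (Hgeom : forall n s, inI a b s -> Rabs (x s - y s) <= D * (/ 2) ^ n).
  { induction n as [|n IHn]; intros s Hs.
    - rewrite Rmult_1_r. apply HD, Hs.
    - rewrite (Hxfix s Hs), (Hyfix s Hs).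
      replace (D * (/ 2) ^ S n) with (D * (/ 2) ^ n / 2) by (simpl; field).
      apply T_half; auto. }
  intros t Ht. apply Rminus_diag_uniq, (Rabs_le_geometric_eq0 _ D).
  intros n; apply Hgeom, Ht.
Qed.

End HalfContractionFixedPoint.

Lemma in_Theta_le_half theta : in_Theta theta -> forall r, 0 <= r -> theta r <= r / 2.
Proof.
  intros [_ [_ [psi [[Hpsi _] Htheta]]]] r Hr.
  rewrite Htheta by exact Hr. pose proof (Hpsi (r / 2) ltac:(lra)). lra.
Qed.

Section IntegralOperator.

Variables a b : R.
Variables K1 K2 f g : R -> R -> R.
Variable h : R -> R.
Hypothesis Hab : a <= b.
Hypotheses (HK1 : cont_on_II a b K1) (HK2 : cont_on_II a b K2).
Hypotheses (Hf : cont_on_IxR a b f) (Hg : cont_on_IxR a b g).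

Let nonlin (x : R -> R) (s : R) : R := f s (x s) + g s (x s).

Lemma cont_on_I_nonlin x : cont_on_I a b x -> cont_on_I a b (nonlin x).
Proof. intros Hx. apply cont_on_I_plus; auto; apply cont_on_I_comp; assumption. Qed.

Lemma cont_on_I_integrand x t : cont_on_I a b x -> inI a b t ->
  cont_on_I a b (fun s => (K1 t s + K2 t s) * nonlin x s).
Proof.
  intros Hx Ht. apply cont_on_I_mult; auto using cont_on_I_nonlin.
  apply cont_on_I_plus; auto; apply cont_on_I_slice; assumption.
Qed.

Lemma cont_on_I_eq_rhs x : cont_on_I a b h -> cont_on_I a b x ->
  cont_on_I a b (eq_rhs a b K1 K2 f g h x).
Proof.
  intros Hh Hx t Ht eps Heps.
  destruct (cont_on_I_bounded a b Hab _ (cont_on_I_nonlin x Hx)) as [M [HM0 HM]].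
  set (c := eps / (2 * (b - a + 1))).
  assert (Hc : 0 < c) by (unfold c; apply Rdiv_lt_0_compat; lra).
  set (e := c / (2 * (M + 1))).
  assert (He : 0 < e) by (unfold e; apply Rdiv_lt_0_compat; lra).
  destruct (cont_on_II_uniform_in_first a b K1 Hab HK1 t Ht e He) as [d1 [Hd1 HK1d]].
  destruct (cont_on_II_uniform_in_first a b K2 Hab HK2 t Ht e He) as [d2 [Hd2 HK2d]].
  destruct (Hh t Ht (eps / 2)) as [d3 [Hd3 Hhd]]; [lra|].
  exists (Rmin d1 (Rmin d2 d3)); split; [repeat apply Rmin_pos; assumption|].
  intros t' Ht' Htt.
  pose proof (Rmin_l d1 (Rmin d2 d3)). pose proof (Rmin_r d1 (Rmin d2 d3)).
  pose proof (Rmin_l d2 d3). pose proof (Rmin_r d2 d3).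
  assert (Hint : Rabs (integral (fun s => (K1 t' s + K2 t' s) * nonlin x s) a b
                     - integral (fun s => (K1 t s + K2 t s) * nonlin x s) a b)
                 <= integral (fun _ => c) a b).
  { apply integral_dist_le; auto using cont_on_I_integrand, cont_on_I_const.
    intros s Hs. assert (Hs' : inI a b s) by (unfold inI; lra).
    replace ((K1 t' s + K2 t' s) * nonlin x s - (K1 t s + K2 t s) * nonlin x s)
      with ((K1 t' s - K1 t s + (K2 t' s - K2 t s)) * nonlin x s) by ring.
    rewrite Rabs_mult.
    replace c with (2 * e * (M + 1)) by (unfold e; field; lra).
    apply Rmult_le_compat; try apply Rabs_pos.
    - pose proof (HK1d t' s Ht' Hs' ltac:(lra)). pose proof (HK2d t' s Ht' Hs' ltac:(lra)).
      pose proof (Rabs_triang (K1 t' s - K1 t s) (K2 t' s - K2 t s)). lra.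
    - pose proof (HM s Hs'). lra. }
  rewrite integral_const in Hint.
  assert (Hcba : c * (b - a) < eps / 2).
  { replace (eps / 2) with (c * (b - a + 1)) by (unfold c; field; lra).
    apply Rmult_lt_compat_l; lra. }
  pose proof (Hhd t' Ht' ltac:(lra)) as Hht.
  change (Rabs ((integral (fun s => (K1 t' s + K2 t' s) * nonlin x s) a b + h t')
    - (integral (fun s => (K1 t s + K2 t s) * nonlin x s) a b + h t)) < eps).
  set (I' := integral (fun s => (K1 t' s + K2 t' s) * nonlin x s) a b) in *.
  set (I := integral (fun s => (K1 t s + K2 t s) * nonlin x s) a b) in *.
  pose proof (Rabs_sub_triang (I' + h t') (I + h t') (I + h t)) as Htri.
  replace (I' + h t' - (I + h t')) with (I' - I) in Htri by ring.
  replace (I + h t' - (I + h t)) with (h t' - h t) in Htri by ring.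
  lra.
Qed.

Variables (theta : R -> R) (lam mu S : R).
Hypothesis Hsign : forall t s, inI a b t -> inI a b s -> 0 <= K1 t s /\ K2 t s <= 0.
Hypothesis Htheta_nonneg : forall r, 0 <= r -> 0 <= theta r.
Hypothesis Htheta_mono : forall r s, 0 <= r -> r <= s -> theta r <= theta s.
Hypothesis Htheta_half : forall r, 0 <= r -> theta r <= r / 2.
Hypotheses (Hlam : 0 < lam) (Hmu : 0 < mu).
Hypothesis Hfg : forall t x y, inI a b t -> x >= y ->
  0 <= f t x - f t y <= lam * theta (x - y) /\
  - (mu * theta (x - y)) <= g t x - g t y <= 0.
Hypothesis HS : forall t, inI a b t -> integral (fun s => K1 t s - K2 t s) a b <= S.
Hypothesis HS1 : (lam + mu) * S <= 1.

Lemma nonlin_dist_le s u v D : inI a b s -> Rabs (u - v) <= D ->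
  Rabs ((f s u + g s u) - (f s v + g s v)) <= (lam + mu) * theta D.
Proof.
  intros Hs Huv.
  assert (Hord : forall u v, v <= u -> Rabs (u - v) <= D ->
    Rabs ((f s u + g s u) - (f s v + g s v)) <= (lam + mu) * theta D).
  { clear u v Huv. intros u v Hvu Huv. rewrite Rabs_pos_eq in Huv by lra.
    destruct (Hfg s u v Hs ltac:(lra)) as [[Hf0 Hf1] [Hg0 Hg1]].
    pose proof (Htheta_nonneg (u - v) ltac:(lra)).
    pose proof (Htheta_mono (u - v) D ltac:(lra) Huv).
    assert (lam * theta (u - v) <= lam * theta D) by (apply Rmult_le_compat_l; lra).
    assert (mu * theta (u - v) <= mu * theta D) by (apply Rmult_le_compat_l; lra).
    assert (0 <= mu * theta (u - v)) by (apply Rmult_le_pos; lra).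
    apply Rabs_le; lra. }
  destruct (Rle_dec v u) as [Hvu|Hvu]; [auto|].
  rewrite Rabs_minus_sym in Huv |- *. apply Hord; [lra|exact Huv].
Qed.

Lemma eq_rhs_half_contraction x y D : cont_on_I a b x -> cont_on_I a b y ->
  (forall s, inI a b s -> Rabs (x s - y s) <= D) ->
  forall t, inI a b t ->
  Rabs (eq_rhs a b K1 K2 f g h x t - eq_rhs a b K1 K2 f g h y t) <= D / 2.
Proof.
  intros Hx Hy Hxy t Ht.
  assert (HD : 0 <= D).
  { pose proof (Rabs_pos (x a - y a)). pose proof (Hxy a ltac:(unfold inI; lra)). lra. }
  set (C := (lam + mu) * theta D).
  assert (HC : 0 <= C) by (apply Rmult_le_pos; [lra|auto]).
  assert (HG : cont_on_I a b (fun s => K1 t s - K2 t s))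
    by (apply cont_on_I_minus; auto; apply cont_on_I_slice; assumption).
  assert (Hint : Rabs (integral (fun s => (K1 t s + K2 t s) * nonlin x s) a b
                     - integral (fun s => (K1 t s + K2 t s) * nonlin y s) a b)
                 <= integral (fun s => C * (K1 t s - K2 t s)) a b).
  { apply integral_dist_le; auto using cont_on_I_integrand.
    - apply cont_on_I_mult; auto using cont_on_I_const.
    - intros s Hs. assert (Hs' : inI a b s) by (unfold inI; lra).
      destruct (Hsign t s Ht Hs') as [HK1s HK2s].
      replace ((K1 t s + K2 t s) * nonlin x s - (K1 t s + K2 t s) * nonlin y s)
        with ((K1 t s + K2 t s) * (nonlin x s - nonlin y s)) by ring.
      rewrite Rabs_mult, Rmult_comm.
      apply Rmult_le_compat; try apply Rabs_pos.
      + apply nonlin_dist_le; auto.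
      + apply Rabs_le; lra. }
  rewrite (integral_scal a b Hab _ _ HG) in Hint.
  assert (HCS : C * integral (fun s => K1 t s - K2 t s) a b <= theta D).
  { apply Rle_trans with (C * S); [apply Rmult_le_compat_l; auto|].
    unfold C. rewrite Rmult_comm, <- Rmult_assoc.
    pose proof (Htheta_nonneg D HD).
    rewrite <- (Rmult_1_l (theta D)) at 2. apply Rmult_le_compat_r; lra. }
  pose proof (Htheta_half D HD).
  unfold eq_rhs.
  replace (integral (fun s => (K1 t s + K2 t s) * (f s (x s) + g s (x s))) a b + h t
    - (integral (fun s => (K1 t s + K2 t s) * (f s (y s) + g s (y s))) a b + h t))
    with (integral (fun s => (K1 t s + K2 t s) * nonlin x s) a b
          - integral (fun s => (K1 t s + K2 t s) * nonlin y s) a b) by (unfold nonlin; ring).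
  lra.
Qed.

End IntegralOperator.

Theorem theorem3p1 (a b : R) (K1 K2 : R -> R -> R) (h : R -> R)
  (f g : R -> R -> R) :
  a < b ->
  cont_on_II a b K1 -> cont_on_II a b K2 -> cont_on_I a b h ->
  cont_on_IxR a b f -> cont_on_IxR a b g ->
  (* (i) *)
  (forall t s, inI a b t -> inI a b s -> 0 <= K1 t s /\ K2 t s <= 0) ->
  (* (ii) *)
  (exists (theta : R -> R) (lam mu : R), in_Theta theta /\ 0 < lam /\ 0 < mu /\
     (forall t x y, inI a b t -> x >= y ->
        0 <= f t x - f t y <= lam * theta (x - y) /\
        - (mu * theta (x - y)) <= g t x - g t y <= 0) /\
  (* (iii) *)
     (exists S, is_lub (fun v => exists t, inI a b t /\
                   v = integral (fun s => K1 t s - K2 t s) a b) S /\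
                (lam + mu) * S <= 1)) ->
  (exists alpha beta, coupled_lower_upper a b K1 K2 f g h alpha beta) ->
  (exists x, is_solution a b K1 K2 f g h x) /\
  (forall x y, is_solution a b K1 K2 f g h x -> is_solution a b K1 K2 f g h y ->
     forall t, inI a b t -> x t = y t).
Proof.
  intros Hab HK1 HK2 Hh Hf Hg Hsign
    [theta [lam [mu [Htheta [Hlam [Hmu [Hfg [S [[HS _] HS1]]]]]]]]] _.
  assert (Hab' : a <= b) by lra.
  pose proof Htheta as [Htheta_nonneg [Htheta_mono _]].
  assert (HSt : forall t, inI a b t -> integral (fun s => K1 t s - K2 t s) a b <= S)
    by (intros t Ht; apply HS; exists t; auto).
  set (T := eq_rhs a b K1 K2 f g h).
  assert (T_cont : forall x, cont_on_I a b x -> cont_on_I a b (T x))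
    by (intros; apply cont_on_I_eq_rhs; assumption).
  pose proof (eq_rhs_half_contraction a b K1 K2 f g h Hab' HK1 HK2 Hf Hg
    theta lam mu S Hsign Htheta_nonneg Htheta_mono (in_Theta_le_half theta Htheta)
    Hlam Hmu Hfg HSt HS1) as T_half.
  split.
  - destruct (half_contraction_fixed_point a b Hab' T T_cont T_half) as [x [Hx Hfix]].
    exists x; split; assumption.
  - intros x y [Hx Hxfix] [Hy Hyfix].
    exact (half_contraction_fixed_point_unique a b Hab' T T_half x y Hx Hy Hxfix Hyfix).
Qed.
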